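(* Let $K\ge1$, $V^{\mathrm c}>0$, and for each $k$ let $\alpha_k>0$ with $\sum_k\alpha_k=1$, $L_k>0$, $V_k^{\mathrm d}>0$, $R_k>0$. Define \[ \overline D_k(t_k,V_k^{\mathrm c})=\frac{L_k(t_kR_k+V_k^{\mathrm c})}{V_k^{\mathrm d}V_k^{\mathrm c}+t_kR_k(V_k^{\mathrm d}+V_k^{\mathrm c})} \] and consider \[ \min_{\{t_k,V_k^{\mathrm c}\}}\sum_{k=1}^K\alpha_k\overline D_k\quad\text{s.t.}\quad \sum_{k=1}^K t_k\le1,\ t_k\ge0,\quad \sum_{k=1}^K V_k^{\mathrm c}\le V^{\mathrm c},\ V_k^{\mathrm c}\ge0. \] Then the optimal solution $\{\overline t_k^*,\overline V_k^{\mathrm c*}\}$ is given by \[ \overline t_k^*=\frac{\overline V_k^{\mathrm c*}\left(\sqrt{\frac{\alpha_kL_kR_k}{\theta^*}}-V_k^{\mathrm d}\right)^+}{R_k(V_k^{\mathrm d}+\overline V_k^{\mathrm c*})},\qquad \overline V_k^{\mathrm c*}=\frac{\overline t_k^*R_k\left(\sqrt{\frac{\alpha_kL_k}{\omega^*}}-V_k^{\mathrm d}\right)^+}{\overline t_k^*R_k+V_k^{\mathrm d}},\qquad\forall k, \] where $(y)^+=\max\{y,0\}$ and $\theta^*,\omega^*$ are the optimal Lagrange multipliers associated with the constraints $\sum_k t_k\le1$ and $\sum_kV_k^{\mathrm c}\le V^{\mathrm c}$, respectively, which satisfy the active constraints $\sum_{k=1}^K\overline t_k^*=1$ and $\sum_{k=1}^K\overline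 V_k^{\mathrm c*}=V^{\mathrm c}$.
   Context: $\overline D_k$ is the end-to-end delay of device $k$ in the partial compression offloading model in the special scenario where the transmission delay of the locally compressed data is neglected, after choosing the locally compressed fraction optimally: $L_k$ raw bits, local compression speed $V_k^{\mathrm d}$, TDMA time fraction $t_k$, average channel rate $R_k$, edge compression speed $V_k^{\mathrm c}$ out of a total $V^{\mathrm c}$. *)

From mathcomp Require Import all_boot all_order all_algebra.
From mathcomp Require Import reals.
Set Implicit Arguments. Unset Strict Implicit. Unset Printing Implicit Defensive.
Import Order.TTheory GRing.Theory Num.Theory.
Local Open Scope ring_scope.

Section Defs.
Variable R : realType.

Definition posp (y : R) : R := Num.max y 0.

(* The denominator vanishes (for nonnegative t, Vc and positive R, Vd)
   only when t = Vc = 0; there we use the continuous extension L / Vd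
   (the value of the formula along t = 0 or along Vc = 0). *)
Definition Dbar (L Vd Rk t Vc : R) : R :=
  let den := Vd * Vc + t * Rk * (Vd + Vc) in
  if den == 0 then L / Vd else L * (t * Rk + Vc) / den.

Variable K : nat.

Definition feasible (Vctot : R) (t Vc : 'I_K -> R) : Prop :=
  (forall k, 0 <= t k) /\ \sum_(k < K) t k <= 1 /\
  (forall k, 0 <= Vc k) /\ \sum_(k < K) Vc k <= Vctot.

Definition objective (alpha L Vd Rk : 'I_K -> R) (t Vc : 'I_K -> R) : R :=
  \sum_(k < K) alpha k * Dbar (L k) (Vd k) (Rk k) (t k) (Vc k).

Definition optimal (Vctot : R) (alpha L Vd Rk : 'I_K -> R) (t Vc : 'I_K -> R) : Prop :=
  feasible Vctot t Vc /\
  forall t' Vc', feasible Vctot t' Vc' ->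
    objective alpha L Vd Rk t Vc <= objective alpha L Vd Rk t' Vc'.

End Defs.

From mathcomp Require Import all_boot all_order all_algebra.
From mathcomp Require Import reals.
From mathcomp Require Import classical_sets topology normedtype derive.
From mathcomp Require Import ring lra.
Set Implicit Arguments. Unset Strict Implicit. Unset Printing Implicit Defensive.
Import Order.TTheory GRing.Theory Num.Theory.
Import numFieldNormedType.Exports.
Local Open Scope ring_scope.
Local Open Scope classical_set_scope.

(* Put a := t R and b := Vc.  The delay is L / (Vd + a b / (a + b)): local
   compression runs in parallel with the offloading pipeline, whose rate
   a b / (a + b) chains transmission and edge compression in series.  This form
   is continuous on the compact feasible set, so an optimum exists, and it is
   symmetric in a and b, so both resources are handled by the same argument.
   At an optimum, exchange arguments show that some device receives both
   resources, that a device holding only one of them could hand it to that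
   device, that spare budget could be handed to it as well, and that all active
   devices share the same marginal gain per unit of t (resp. Vc): otherwise a
   small transfer from a lower to a higher gain would help.  These common gains
   are theta and omega, and solving "marginal gain = theta" for t_k
   (resp. "= omega" for Vc_k) gives the closed forms. *)

Section SerialRate.
Variable R : realType.
Implicit Types a b : R.

Definition serial_rate a b : R := posp a * posp b / (posp a + posp b).

Lemma posp_ge0 a : 0 <= posp a.
Proof. by rewrite /posp le_max lexx orbT. Qed.

Lemma posp_id a : 0 <= a -> posp a = a.
Proof. by move=> /max_idPl. Qed.

Lemma serial_rateE a b : 0 <= a -> 0 <= b -> serial_rate a b = a * b / (a + b).
Proof. by move=> a0 b0; rewrite /serial_rate !posp_id. Qed.

Lemma serial_rateC a b : serial_rate a b = serial_rate b a.
Proof. by rewrite /serial_rate [posp a * _]mulrC [posp a + _]addrC. Qed.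

Lemma serial_rate0r b : serial_rate 0 b = 0.
Proof. by rewrite /serial_rate posp_id // !mul0r. Qed.

Lemma serial_rate_ge0 a b : 0 <= serial_rate a b.
Proof. by rewrite divr_ge0 ?mulr_ge0 ?addr_ge0 ?posp_ge0. Qed.

Lemma serial_rate_gt0 a b : 0 < a -> 0 < b -> 0 < serial_rate a b.
Proof.
by move=> a0 b0; rewrite serial_rateE ?ltW // divr_gt0 ?mulr_gt0 ?addr_gt0.
Qed.

Lemma serial_rate_le_posp a b : serial_rate a b <= posp a.
Proof.
have [a0 b0] := (posp_ge0 a, posp_ge0 b).
rewrite /serial_rate; have [->|nz] := eqVneq (posp a + posp b) 0.
  by rewrite invr0 mulr0.
have s0 : 0 < posp a + posp b by rewrite lt_def nz addr_ge0.
rewrite ler_pdivrMr //; nra.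
Qed.

Lemma continuous_posp_comp (T : topologicalType) (f : T -> R) (p : T) :
  f @ p --> f p -> (fun q => posp (f q)) @ p --> posp (f p).
Proof. by move=> fp; apply: continuous_max => //; exact: cvg_cst. Qed.

(* At the corner [(0, 0)] the quotient form is useless; there the bound
   [0 <= serial_rate a b <= posp a] squeezes it to [0]. *)
Lemma continuous_serial_rate : continuous (fun p : R * R => serial_rate p.1 p.2).
Proof.
case=> a b.
have ca : (fun q : R * R => posp q.1) @ (a, b) --> posp a.
  by apply: continuous_posp_comp; exact: cvg_fst.
have cb : (fun q : R * R => posp q.2) @ (a, b) --> posp b.
  by apply: continuous_posp_comp; exact: cvg_snd.
have [a0 b0] := (posp_ge0 a, posp_ge0 b).
have [s0|nz] := eqVneq (posp a + posp b) 0; last first.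
  by apply: cvgM; [exact: cvgM | apply: cvgV => //; exact: cvgD].
have pa0 : posp a = 0 by lra.
rewrite /continuous_at /= {2}/serial_rate s0 invr0 mulr0.
apply: (@squeeze_cvgr _ _ _ _ (fun _ => 0) (fun q : R * R => posp q.1)).
- by apply: nearW => q; rewrite serial_rate_ge0 serial_rate_le_posp.
- exact: cvg_cst.
- by rewrite -pa0.
Qed.

End SerialRate.

Section Delay.
Variable R : realType.
Implicit Types L Vd a b r x e : R.

Definition delay L Vd a b := L / (Vd + serial_rate a b).

Definition delay_den Vd a b := Vd * (a + b) + a * b.

Lemma Dbar_delay L Vd r t V : 0 < Vd -> 0 <= t * r -> 0 <= V ->
  Dbar L Vd r t V = delay L Vd (t * r) V.
Proof.
rewrite /Dbar /delay; set a := t * r => Vd0 a0 V0; rewrite serial_rateE //.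
have [den0|den_nz] := eqVneq (Vd * V + a * (Vd + V)) 0.
  have [a_0 V_0] : a = 0 /\ V = 0 by split; nra.
  by rewrite a_0 V_0 !mul0r addr0.
have aV_nz : a + V != 0 by apply: contraNneq den_nz => aV0; nra.
by field; rewrite aV_nz; apply: contraNneq den_nz => h; nra.
Qed.

Lemma delayC L Vd a b : delay L Vd a b = delay L Vd b a.
Proof. by rewrite /delay serial_rateC. Qed.

Lemma delay0r L Vd b : delay L Vd 0 b = L / Vd.
Proof. by rewrite /delay serial_rate0r addr0. Qed.

Lemma delayr0 L Vd a : delay L Vd a 0 = L / Vd.
Proof. by rewrite delayC delay0r. Qed.

Lemma delay_lt L Vd a b : 0 < L -> 0 < Vd -> 0 < a -> 0 < b -> delay L Vd a b < L / Vd.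
Proof.
move=> L0 Vd0 a0 b0; have s0 := serial_rate_gt0 a0 b0.
by rewrite /delay ltr_pM2l // ltf_pV2 ?posrE ?ltrDl //; lra.
Qed.

Lemma delay_den_gt0 Vd a b : 0 < Vd -> 0 <= a -> 0 < b -> 0 < delay_den Vd a b.
Proof. by move=> Vd0 a0 b0; rewrite /delay_den; nra. Qed.

Lemma delayE L Vd a b : 0 < Vd -> 0 <= a -> 0 < b ->
  delay L Vd a b = L * (a + b) / delay_den Vd a b.
Proof.
move=> Vd0 a0 b0; rewrite /delay serial_rateE ?(ltW b0) //.
have Db := delay_den_gt0 Vd0 a0 b0; rewrite /delay_den in Db *.
by field; rewrite !gt_eqF //; lra.
Qed.

Lemma delayB L Vd a a' b : 0 < Vd -> 0 <= a -> 0 <= a' -> 0 < b ->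
  delay L Vd a' b - delay L Vd a b =
  L * b ^+ 2 * (a - a') / (delay_den Vd a' b * delay_den Vd a b).
Proof.
move=> Vd0 a0 a'0 b0; have D := delay_den_gt0 Vd0 a0 b0.
have D' := delay_den_gt0 Vd0 a'0 b0.
rewrite !delayE //; rewrite /delay_den in D D' *.
by field; rewrite !gt_eqF.
Qed.

Lemma delay_decr L Vd a a' b : 0 < L -> 0 < Vd -> 0 < b -> 0 <= a -> a < a' ->
  delay L Vd a' b < delay L Vd a b.
Proof.
move=> L0 Vd0 b0 a0 aa'; have a'0 : 0 <= a' by rewrite (le_trans a0) ?ltW.
rewrite -subr_lt0 delayB // ltr_pdivrMr ?mulr_gt0 ?delay_den_gt0 // mul0r.
by rewrite pmulr_rlt0 ?subr_lt0 // mulr_gt0 ?exprn_gt0.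
Qed.

Lemma continuous_delay L Vd : 0 < Vd -> continuous (fun p : R * R => delay L Vd p.1 p.2).
Proof.
move=> Vd0 p; apply: cvgMl_tmp; apply: cvgV.
  by rewrite gt_eqF // ltr_wpDr ?serial_rate_ge0.
by apply: cvgD; [exact: cvg_cst | exact: continuous_serial_rate].
Qed.

(* [- d/dx (w * delay L Vd (x * r) b)], see [delay_increment]. *)
Definition marginal_gain w L Vd r x b :=
  w * L * r * b ^+ 2 / delay_den Vd (x * r) b ^+ 2.

Lemma marginal_gain_gt0 w L Vd r x b : 0 < w -> 0 < L -> 0 < Vd -> 0 < r -> 0 <= x -> 0 < b ->
  0 < marginal_gain w L Vd r x b.
Proof.
move=> w0 L0 Vd0 r0 x0 b0; have a0 : 0 <= x * r := mulr_ge0 x0 (ltW r0).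
by rewrite /marginal_gain divr_gt0 ?exprn_gt0 ?mulr_gt0 ?delay_den_gt0.
Qed.

Lemma delay_increment w L Vd r x e b : 0 < Vd -> 0 < r -> 0 < b -> 0 <= x -> 0 <= x + e ->
  w * (delay L Vd ((x + e) * r) b - delay L Vd (x * r) b) =
  - (e * marginal_gain w L Vd r x b) *
    (delay_den Vd (x * r) b / delay_den Vd ((x + e) * r) b).
Proof.
move=> Vd0 r0 b0 x0 xe0.
have [a0 a'0] := (mulr_ge0 x0 (ltW r0), mulr_ge0 xe0 (ltW r0)).
have [D D'] := (delay_den_gt0 Vd0 a0 b0, delay_den_gt0 Vd0 a'0 b0).
rewrite delayB // /marginal_gain.
by field; rewrite !gt_eqF.
Qed.

Lemma marginal_gainK w L Vd r x b : 0 < w -> 0 < L -> 0 < Vd -> 0 < r -> 0 <= x -> 0 < b ->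
  x = b * posp (Num.sqrt (w * L * r / marginal_gain w L Vd r x b) - Vd) / (r * (Vd + b)).
Proof.
move=> w0 L0 Vd0 r0 x0 b0; have a0 : 0 <= x * r := mulr_ge0 x0 (ltW r0).
have D := delay_den_gt0 Vd0 a0 b0.
have -> : w * L * r / marginal_gain w L Vd r x b = (delay_den Vd (x * r) b / b) ^+ 2.
  by rewrite /marginal_gain; field; rewrite !gt_eqF.
rewrite sqrtr_sqr ger0_norm; last exact: divr_ge0 (ltW D) (ltW b0).
have -> : delay_den Vd (x * r) b / b - Vd = x * r * (Vd + b) / b.
  by rewrite /delay_den; field; rewrite gt_eqF.
have Vdb : 0 < Vd + b by rewrite addr_gt0.
rewrite posp_id; last exact: divr_ge0 (mulr_ge0 a0 (ltW Vdb)) (ltW b0).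
by field; rewrite !gt_eqF.
Qed.

End Delay.

Section IncrAt.
Variables (V W : zmodType) (K : nat).
Implicit Types (y : 'I_K -> V) (i m : 'I_K).

Lemma sumr_eq_except (F G : 'I_K -> W) i : (forall m, m != i -> F m = G m) ->
  \sum_(m < K) F m = \sum_(m < K) G m + (F i - G i).
Proof.
move=> FG; rewrite (bigD1 i) //= [in RHS](bigD1 i) //= (eq_bigr G) => [|m /FG //].
by rewrite addrAC [G i + _]addrC subrK.
Qed.

Definition incr_at y i (e : V) : 'I_K -> V := fun m => if m == i then y m + e else y m.

Lemma incr_at_id y i e : incr_at y i e i = y i + e.
Proof. by rewrite /incr_at eqxx. Qed.

Lemma incr_at_other y i e m : m != i -> incr_at y i e m = y m.
Proof. by rewrite /incr_at => /negbTE ->. Qed.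

Lemma sum_incr_at_map (f : 'I_K -> V -> W) y i e :
  \sum_(m < K) f m (incr_at y i e m) = \sum_(m < K) f m (y m) + (f i (y i + e) - f i (y i)).
Proof.
by rewrite (@sumr_eq_except _ (fun m => f m (y m)) i) ?incr_at_id // => m /incr_at_other ->.
Qed.

End IncrAt.

Lemma sum_incr_at (V : zmodType) K (y : 'I_K -> V) i e :
  \sum_(m < K) incr_at y i e m = \sum_(m < K) y m + e.
Proof. by rewrite (sum_incr_at_map (fun _ v => v)) addrAC subrr add0r. Qed.

Lemma incr_at_ge0 (R : numDomainType) K (y : 'I_K -> R) i e :
  (forall m, 0 <= y m) -> 0 <= y i + e -> forall m, 0 <= incr_at y i e m.
Proof. by move=> y0 ye0 m; rewrite /incr_at; case: eqP => [->|]. Qed.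

Lemma exists_small_step (R : realFieldType) (x E M : R) : 0 < x -> 0 < E -> 0 <= M ->
  exists2 e, 0 < e <= x & e * M < E.
Proof.
move=> x0 E0 M0; have M1 : 0 < M + 1 by lra.
exists (Num.min x (E / (M + 1))); first by rewrite lt_min x0 divr_gt0 //= ge_min lexx.
have le_e : Num.min x (E / (M + 1)) <= E / (M + 1) by rewrite ge_min lexx orbT.
have : E / (M + 1) * M < E by rewrite mulrAC ltr_pdivrMr // mulrDr mulr1 ltrDl.
by apply: le_lt_trans; rewrite ler_wpM2r.
Qed.

Lemma transfer_increment_lt (R : realFieldType) (gi gj Di Dj ci cj e : R) :
  0 < e -> 0 < Di + e * ci -> 0 < Dj - e * cj ->
  e * (gj * Dj * ci + gi * Di * cj) < (gi - gj) * Di * Dj ->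
  - (e * gi) * (Di / (Di + e * ci)) + - (- e * gj) * (Dj / (Dj - e * cj)) < 0.
Proof.
move=> e0 Pi0 Pj0 small.
have gain_lt : gj * (Dj / (Dj - e * cj)) < gi * (Di / (Di + e * ci)).
  rewrite -subr_gt0.
  have -> : gi * (Di / (Di + e * ci)) - gj * (Dj / (Dj - e * cj)) =
      ((gi - gj) * Di * Dj - e * (gj * Dj * ci + gi * Di * cj)) /
      ((Di + e * ci) * (Dj - e * cj)).
    by field; rewrite !gt_eqF.
  by rewrite divr_gt0 ?mulr_gt0 // subr_gt0.
nra.
Qed.

Section Allocation.
Variables (R : realType) (K : nat) (w L Vd r b x : 'I_K -> R).
Hypotheses (w_gt0 : forall m, 0 < w m) (L_gt0 : forall m, 0 < L m).
Hypotheses (Vd_gt0 : forall m, 0 < Vd m) (r_gt0 : forall m, 0 < r m).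
Hypotheses (b_ge0 : forall m, 0 <= b m) (x_ge0 : forall m, 0 <= x m).

(* The objective as a function of one resource [y], scaled by [r], the other
   resource [b] being frozen; by [delayC] both resources fit this shape. *)
Definition cost (y : 'I_K -> R) := \sum_(m < K) w m * delay (L m) (Vd m) (y m * r m) (b m).

Lemma cost_incr_at y i e : cost (incr_at y i e) =
  cost y + w i * (delay (L i) (Vd i) ((y i + e) * r i) (b i) -
                  delay (L i) (Vd i) (y i * r i) (b i)).
Proof.
rewrite /cost (sum_incr_at_map (fun m v => w m * delay (L m) (Vd m) (v * r m) (b m))).
by rewrite mulrBr.
Qed.

Lemma cost_incr_at_lt j e : 0 < b j -> 0 < e -> cost (incr_at x j e) < cost x.
Proof.
move=> bj e0; rewrite cost_incr_at gtrDl pmulr_rlt0 // subr_lt0.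
apply: delay_decr => //; first exact: mulr_ge0 (x_ge0 j) (ltW (r_gt0 j)).
by rewrite ltr_pM2r // ltrDl.
Qed.

Lemma cost_move_lt k j : b k = 0 -> 0 < b j -> 0 < x k ->
  cost (incr_at (incr_at x j (x k)) k (- x k)) < cost x.
Proof.
move=> bk bj xk; have kj : k != j by apply: contraTneq bj => <-; rewrite bk ltxx.
rewrite cost_incr_at incr_at_other // bk !delayr0 subrr mulr0 addr0.
exact: cost_incr_at_lt.
Qed.

Lemma cost_transfer_lt i j : i != j -> 0 < x j -> 0 < b i -> 0 < b j ->
  marginal_gain (w j) (L j) (Vd j) (r j) (x j) (b j) <
  marginal_gain (w i) (L i) (Vd i) (r i) (x i) (b i) ->
  exists2 e, 0 < e <= x j & cost (incr_at (incr_at x i e) j (- e)) < cost x.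
Proof.
move=> ij xj bi bj.
set gi := marginal_gain _ _ _ _ (x i) _; set gj := marginal_gain _ _ _ _ (x j) _ => gji.
set Di := delay_den (Vd i) (x i * r i) (b i); set Dj := delay_den (Vd j) (x j * r j) (b j).
set ci := r i * (Vd i + b i); set cj := r j * (Vd j + b j).
have Di0 : 0 < Di := delay_den_gt0 (Vd_gt0 i) (mulr_ge0 (x_ge0 i) (ltW (r_gt0 i))) bi.
have Dj0 : 0 < Dj := delay_den_gt0 (Vd_gt0 j) (mulr_ge0 (x_ge0 j) (ltW (r_gt0 j))) bj.
have ci0 : 0 <= ci := mulr_ge0 (ltW (r_gt0 i)) (addr_ge0 (ltW (Vd_gt0 i)) (b_ge0 i)).
have cj0 : 0 <= cj := mulr_ge0 (ltW (r_gt0 j)) (addr_ge0 (ltW (Vd_gt0 j)) (b_ge0 j)).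
have gj0 : 0 < gj := marginal_gain_gt0 (w_gt0 j) (L_gt0 j) (Vd_gt0 j) (r_gt0 j) (x_ge0 j) bj.
have gi0 : 0 < gi := lt_trans gj0 gji.
have E0 : 0 < (gi - gj) * Di * Dj by rewrite !mulr_gt0 ?subr_gt0.
have M0 : 0 <= gj * Dj * ci + gi * Di * cj.
  by rewrite addr_ge0 // mulr_ge0 // ltW // mulr_gt0.
have [e /andP[e0 ex] small] := exists_small_step xj E0 M0.
exists e; first by rewrite e0 ex.
have xie : 0 <= x i + e := addr_ge0 (x_ge0 i) (ltW e0).
have xje : 0 <= x j + - e by rewrite subr_ge0.
have Pi : delay_den (Vd i) ((x i + e) * r i) (b i) = Di + e * ci.
  by rewrite /Di /ci /delay_den; ring.
have Pj : delay_den (Vd j) ((x j + - e) * r j) (b j) = Dj - e * cj.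
  by rewrite /Dj /cj /delay_den; ring.
have Pi0 : 0 < Di + e * ci := ltr_wpDr (mulr_ge0 (ltW e0) ci0) Di0.
have Pj0 : 0 < Dj - e * cj.
  by rewrite -Pj delay_den_gt0 // mulr_ge0 // ltW.
rewrite cost_incr_at incr_at_other 1?eq_sym // cost_incr_at !delay_increment //.
rewrite -/gi -/gj -/Di -/Dj Pi Pj.
by rewrite -addrA gtrDl transfer_increment_lt.
Qed.

Variable C : R.
Hypothesis x_budget : \sum_(m < K) x m <= C.
Hypothesis x_min : forall y, (forall m, 0 <= y m) -> \sum_(m < K) y m <= C -> cost x <= cost y.

Lemma cost_min_not_lt y : (forall m, 0 <= y m) -> \sum_(m < K) y m <= C -> ~ cost y < cost x.
Proof. by move=> y0 yC; apply/negP; rewrite -leNgt x_min. Qed.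

Lemma cost_min_idle k j : b k = 0 -> 0 < b j -> x k = 0.
Proof.
move=> bk bj; apply/eqP; rewrite eq_le x_ge0 andbT leNgt; apply/negP => xk.
have kj : k != j by apply: contraTneq bj => <-; rewrite bk ltxx.
apply: (cost_min_not_lt _ _ (cost_move_lt bk bj xk)).
  apply: incr_at_ge0; first by apply: incr_at_ge0 => //; rewrite addr_ge0.
  by rewrite incr_at_other // subrr.
by rewrite !sum_incr_at addrK.
Qed.

Lemma cost_min_budget j : 0 < b j -> \sum_(m < K) x m = C.
Proof.
move=> bj; apply/eqP; rewrite eq_le x_budget leNgt; apply/negP => lt_xC.
apply: (cost_min_not_lt _ _ (cost_incr_at_lt bj (_ : 0 < C - \sum_(m < K) x m))).
- by apply: incr_at_ge0 => //; rewrite addr_ge0 // subr_ge0 ltW.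
- by rewrite sum_incr_at addrC subrK.
- by rewrite subr_gt0.
Qed.

Lemma cost_min_gain_eq i j : 0 < x i -> 0 < x j -> 0 < b i -> 0 < b j ->
  marginal_gain (w i) (L i) (Vd i) (r i) (x i) (b i) =
  marginal_gain (w j) (L j) (Vd j) (r j) (x j) (b j).
Proof.
have no_lt i' j' : 0 < x j' -> 0 < b i' -> 0 < b j' ->
    ~ marginal_gain (w j') (L j') (Vd j') (r j') (x j') (b j') <
      marginal_gain (w i') (L i') (Vd i') (r i') (x i') (b i').
  move=> xj bi bj lt_g; have ij : i' != j' by apply: contraTneq lt_g => ->; rewrite ltxx.
  have [e /andP[e0 ex] lt_cost] := cost_transfer_lt ij xj bi bj lt_g.
  apply: (cost_min_not_lt _ _ lt_cost).
    apply: incr_at_ge0; first by apply: incr_at_ge0 => //; rewrite addr_ge0 // ltW.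
    by rewrite incr_at_other 1?eq_sym // subr_ge0.
  by rewrite !sum_incr_at addrK.
move=> xi xj bi bj; apply/eqP; rewrite eq_le !leNgt.
by apply/andP; split; apply/negP; [exact: no_lt | exact: no_lt].
Qed.

End Allocation.

Lemma objective_cost (R : realType) K (alpha L Vd Rk t V : 'I_K -> R) :
  (forall k, 0 < Vd k) -> (forall k, 0 < Rk k) ->
  (forall k, 0 <= t k) -> (forall k, 0 <= V k) ->
  objective alpha L Vd Rk t V = cost alpha L Vd Rk V t.
Proof.
move=> Vd0 Rk0 t0 V0; apply: eq_bigr => k _.
by rewrite Dbar_delay // mulr_ge0 // ltW.
Qed.

Lemma objective_cost_sym (R : realType) K (alpha L Vd Rk t V : 'I_K -> R) :
  (forall k, 0 < Vd k) -> (forall k, 0 < Rk k) ->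
  (forall k, 0 <= t k) -> (forall k, 0 <= V k) ->
  objective alpha L Vd Rk t V = cost alpha L Vd (fun=> 1) (fun k => t k * Rk k) V.
Proof.
by move=> *; rewrite objective_cost //; apply: eq_bigr => k _; rewrite mulr1 delayC.
Qed.

Lemma ler_sum_term (R : numDomainType) K (f : 'I_K -> R) i :
  (forall k, 0 <= f k) -> f i <= \sum_(k < K) f k.
Proof. by move=> f0; rewrite (bigD1 i) //= lerDl sumr_ge0. Qed.

Section Existence.
Import ArrowAsProduct.
Variables (R : realType) (K : nat).
Notation alloc := (('I_K -> R) * ('I_K -> R))%type.

Lemma continuous_fst_coord k : continuous (fun p : alloc => p.1 k).
Proof.
move=> p; apply: (cvg_comp (fun q : alloc => q.1) (fun f : 'I_K -> R => f k)).
  by case: p => ? ?; exact: cvg_fst.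
exact: (@proj_continuous _ (fun _ => R) k).
Qed.

Lemma continuous_snd_coord k : continuous (fun p : alloc => p.2 k).
Proof.
move=> p; apply: (cvg_comp (fun q : alloc => q.2) (fun f : 'I_K -> R => f k)).
  by case: p => ? ?; exact: cvg_snd.
exact: (@proj_continuous _ (fun _ => R) k).
Qed.

Lemma continuous_sum_ord (T : topologicalType) (f : 'I_K -> T -> R) :
  (forall k, continuous (f k)) -> continuous (fun x => \sum_(k < K) f k x).
Proof.
by move=> f_cont; apply: (continuous_big (op := +%R) add_continuous) => k _; exact: f_cont.
Qed.

Lemma compact_box (a b : R) : compact [set f : 'I_K -> R | forall i, a <= f i <= b].
Proof.
have -> : [set f : 'I_K -> R | forall i, a <= f i <= b] =
    [set f | forall i, (`[a, b]%classic : set R) (f i)].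
  by apply/seteqP; split => f /= fab i; have := fab i; rewrite /= in_itv.
exact: (@tychonoff _ (fun _ => R) (fun _ => (`[a, b]%classic : set R))
  (fun _ => @segment_compact R a b)).
Qed.

Lemma compact_feasible (Vctot : R) : compact [set p : alloc | feasible Vctot p.1 p.2].
Proof.
have -> : [set p : alloc | feasible Vctot p.1 p.2] =
    ([set f | forall i, 0 <= f i <= 1] `*` [set f | forall i, 0 <= f i <= Vctot]) `&`
    ((fun p : alloc => \sum_(k < K) p.1 k) @^-1` [set s | s <= 1] `&`
     (fun p : alloc => \sum_(k < K) p.2 k) @^-1` [set s | s <= Vctot]).
  apply/seteqP; split => [[t V] /= [t0 [t1 [V0 VC]]]|[t V] [[/= tb Vb] [/= t1 VC]]].
    split; [split|by []] => i /=.
      by rewrite t0 (le_trans (ler_sum_term i t0)).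
    by rewrite V0 (le_trans (ler_sum_term i V0)).
  by split; [move=> i; case/andP: (tb i)|split; [|split; [move=> i; case/andP: (Vb i)|]]].
apply: compact_closedI; first by apply: compact_setX; exact: compact_box.
apply: closedI; apply: preimage_closed; [|exact: closed_le| |exact: closed_le].
  by move=> p _; apply: continuous_sum_ord => k; exact: continuous_fst_coord.
by move=> p _; apply: continuous_sum_ord => k; exact: continuous_snd_coord.
Qed.

Lemma continuous_weighted_delay (a L r Vd : R) : 0 < Vd ->
  continuous (fun x : R * R => a * delay L Vd (x.1 * r) x.2).
Proof.
move=> Vd0 [x1 x2].
have fst_scaled : (fun q : R * R => q.1 * r) @ (x1, x2) --> x1 * r.
  by apply: cvgMr_tmp; exact: cvg_fst.
have scaled : (fun q : R * R => (q.1 * r, q.2)) @ (x1, x2) --> (x1 * r, x2).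
  exact: cvg_pair fst_scaled cvg_snd.
apply: cvgMl_tmp.
exact: cvg_comp _ _ scaled (@continuous_delay _ L Vd Vd0 (x1 * r, x2)).
Qed.

Lemma exists_optimal (Vctot : R) (alpha L Vd Rk : 'I_K -> R) :
  0 <= Vctot -> (forall k, 0 < Vd k) -> (forall k, 0 < Rk k) ->
  exists t Vc, optimal Vctot alpha L Vd Rk t Vc.
Proof.
move=> VC0 Vd0 Rk0.
pose F (p : alloc) := \sum_(k < K) alpha k * delay (L k) (Vd k) (p.1 k * Rk k) (p.2 k).
have feasible0 : [set p : alloc | feasible Vctot p.1 p.2] !=set0.
  by exists (fun=> 0, fun=> 0); rewrite /= /feasible !big1.
have F_cont : {within [set p : alloc | feasible Vctot p.1 p.2], continuous F}.
  apply: continuous_subspaceT; apply: continuous_sum_ord => k p.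
  have coords : (fun q : alloc => (q.1 k, q.2 k)) @ p --> (p.1 k, p.2 k).
    exact: cvg_pair (@continuous_fst_coord k p) (@continuous_snd_coord k p).
  exact: cvg_comp _ _ coords
    (@continuous_weighted_delay (alpha k) (L k) (Rk k) (Vd k) (Vd0 k) (p.1 k, p.2 k)).
have [[t V] /= tV_feas tV_min] := compact_EVT_min feasible0 (@compact_feasible Vctot) F_cont.
rewrite inE in tV_feas; exists t, V; split => // t' V' tV'_feas.
have [[t0 [_ [V0 _]]] [t'0 [_ [V'0 _]]]] := (tV_feas, tV'_feas).
rewrite !objective_cost //; apply: (tV_min (t', V')).
by rewrite inE.
Qed.

End Existence.

Section OptimalAllocation.
Variables (R : realType) (K : nat) (Vctot : R) (alpha L Vd Rk t V : 'I_K -> R).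
Hypotheses (K_gt0 : (1 <= K)%N) (Vctot_gt0 : 0 < Vctot).
Hypotheses (alpha_gt0 : forall k, 0 < alpha k) (L_gt0 : forall k, 0 < L k).
Hypotheses (Vd_gt0 : forall k, 0 < Vd k) (Rk_gt0 : forall k, 0 < Rk k).
Hypothesis tV_opt : optimal Vctot alpha L Vd Rk t V.

Let t_ge0 : forall k, 0 <= t k := tV_opt.1.1.
Let t_budget : \sum_(k < K) t k <= 1 := tV_opt.1.2.1.
Let V_ge0 : forall k, 0 <= V k := tV_opt.1.2.2.1.
Let V_budget : \sum_(k < K) V k <= Vctot := tV_opt.1.2.2.2.
Let tR_ge0 k : 0 <= t k * Rk k := mulr_ge0 (t_ge0 k) (ltW (Rk_gt0 k)).
Let one_gt0 (k : 'I_K) : (0 : R) < 1 := ltr01.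

Lemma optimal_t_min y : (forall k, 0 <= y k) -> \sum_(k < K) y k <= 1 ->
  cost alpha L Vd Rk V t <= cost alpha L Vd Rk V y.
Proof.
move=> y0 y1; rewrite -!objective_cost //.
by apply: tV_opt.2; split.
Qed.

Lemma optimal_V_min y : (forall k, 0 <= y k) -> \sum_(k < K) y k <= Vctot ->
  cost alpha L Vd (fun=> 1) (fun k => t k * Rk k) V <=
  cost alpha L Vd (fun=> 1) (fun k => t k * Rk k) y.
Proof.
move=> y0 yC; rewrite -!objective_cost_sym //.
by apply: tV_opt.2.
Qed.

(* Otherwise every device only compresses locally, at delay [L k / Vd k], and
   handing both budgets to a single device does better. *)
Lemma optimal_exists_active : exists j, 0 < t j /\ 0 < V j.
Proof.
have [/existsP[j /andP[tj Vj]]|/existsPn unserved] :=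
  boolP [exists j, (0 < t j) && (0 < V j)]; first by exists j.
exfalso.
have local k : delay (L k) (Vd k) (t k * Rk k) (V k) = L k / Vd k.
  move: (unserved k); rewrite negb_and -!leNgt => /orP[tk|Vk].
    by rewrite (@le_anti _ _ (t k) 0) ?tk ?t_ge0 // mul0r delay0r.
  by rewrite (@le_anti _ _ (V k) 0) ?Vk ?V_ge0 // delayr0.
pose i0 : 'I_K := Ordinal K_gt0.
pose zero : 'I_K -> R := fun=> 0.
pose t' := incr_at zero i0 1; pose V' := incr_at zero i0 Vctot.
have t'0 : forall k, 0 <= t' k by apply: incr_at_ge0 => //; rewrite add0r.
have V'0 : forall k, 0 <= V' k by apply: incr_at_ge0 => //; rewrite add0r ltW.
have feasible' : feasible Vctot t' V' by rewrite /feasible !sum_incr_at big1 // !add0r.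
suff : objective alpha L Vd Rk t' V' < objective alpha L Vd Rk t V.
  by rewrite ltNge tV_opt.2.
rewrite !objective_cost // /cost.
rewrite (@sumr_eq_except _ _ _ (fun k => alpha k * (L k / Vd k)) i0); last first.
  by move=> k ki0; rewrite /t' /V' !incr_at_other // mul0r delay0r.
under [X in _ < X]eq_bigr do rewrite local.
rewrite gtrDl subr_lt0 ltr_pM2l // /t' /V' !incr_at_id !add0r.
by rewrite delay_lt // mul1r.
Qed.

Lemma optimal_t_gt0E k : (0 < t k) = (0 < V k).
Proof.
have [j [tj Vj]] := optimal_exists_active.
have t_idle := cost_min_idle alpha_gt0 L_gt0 Vd_gt0 Rk_gt0 t_ge0 t_budget optimal_t_min.
have V_idle := cost_min_idle alpha_gt0 L_gt0 Vd_gt0 one_gt0 V_ge0 V_budget optimal_V_min.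
apply/idP/idP => pos.
  rewrite lt_def V_ge0 andbT; apply: contraTneq pos => Vk0.
  by rewrite (t_idle k j) ?ltxx.
rewrite lt_def t_ge0 andbT; apply: contraTneq pos => tk0.
by rewrite (V_idle k j) ?ltxx ?tk0 ?mul0r ?mulr_gt0.
Qed.

Lemma optimal_budgets : \sum_(k < K) t k = 1 /\ \sum_(k < K) V k = Vctot.
Proof.
have [j [tj Vj]] := optimal_exists_active; split.
  exact: (cost_min_budget alpha_gt0 L_gt0 Vd_gt0 Rk_gt0 t_ge0 t_budget optimal_t_min Vj).
apply: (cost_min_budget alpha_gt0 L_gt0 Vd_gt0 one_gt0 V_ge0 V_budget optimal_V_min (j := j)).
exact: mulr_gt0.
Qed.

Lemma optimal_inactive k : t k <= 0 -> t k = 0 /\ V k = 0.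
Proof.
move=> tk; have Vk : V k <= 0 by rewrite leNgt -optimal_t_gt0E -leNgt.
by split; apply: le_anti; rewrite ?tk ?Vk ?t_ge0 ?V_ge0.
Qed.

Lemma optimal_t_closed_form : exists2 theta, 0 < theta &
  forall k, t k = V k * posp (Num.sqrt (alpha k * L k * Rk k / theta) - Vd k)
                  / (Rk k * (Vd k + V k)).
Proof.
have [j [tj Vj]] := optimal_exists_active.
exists (marginal_gain (alpha j) (L j) (Vd j) (Rk j) (t j) (V j)).
  exact: marginal_gain_gt0.
move=> k; have [tk|/optimal_inactive[-> ->]] := ltrP 0 (t k); last by rewrite !mul0r.
have Vk : 0 < V k by rewrite -optimal_t_gt0E.
rewrite (cost_min_gain_eq alpha_gt0 L_gt0 Vd_gt0 Rk_gt0 V_ge0 t_ge0 t_budget optimal_t_min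
  tj tk Vj Vk).
exact: marginal_gainK.
Qed.

Lemma optimal_V_closed_form : exists2 omega, 0 < omega &
  forall k, V k = t k * Rk k * posp (Num.sqrt (alpha k * L k / omega) - Vd k)
                  / (t k * Rk k + Vd k).
Proof.
have [j [tj Vj]] := optimal_exists_active.
have tRj : 0 < t j * Rk j by rewrite mulr_gt0.
exists (marginal_gain (alpha j) (L j) (Vd j) 1 (V j) (t j * Rk j)).
  exact: marginal_gain_gt0.
move=> k; have [tk|/optimal_inactive[-> ->]] := ltrP 0 (t k); last by rewrite !mul0r.
have [Vk tRk] : 0 < V k /\ 0 < t k * Rk k.
  by rewrite -optimal_t_gt0E mulr_gt0.
rewrite (cost_min_gain_eq alpha_gt0 L_gt0 Vd_gt0 one_gt0 tR_ge0 V_ge0 V_budget optimal_V_min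
  Vj Vk tRj tRk) /=.
have := marginal_gainK (alpha_gt0 k) (L_gt0 k) (Vd_gt0 k) ltr01 (V_ge0 k) tRk.
by rewrite mulr1 mul1r [Vd k + _]addrC.
Qed.

End OptimalAllocation.

Theorem theorem5 (R : realType) (K : nat) (Vctot : R)
  (alpha L Vd Rk : 'I_K -> R) :
  (1 <= K)%N -> 0 < Vctot ->
  (forall k, 0 < alpha k) -> \sum_(k < K) alpha k = 1 ->
  (forall k, 0 < L k) -> (forall k, 0 < Vd k) -> (forall k, 0 < Rk k) ->
  (exists t Vc : 'I_K -> R, optimal Vctot alpha L Vd Rk t Vc) /\
  (forall t Vc : 'I_K -> R, optimal Vctot alpha L Vd Rk t Vc ->
     exists theta omega : R, 0 < theta /\ 0 < omega /\
       (forall k, t k = Vc k * posp (Num.sqrt (alpha k * L k * Rk k / theta) - Vd k)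
                         / (Rk k * (Vd k + Vc k))) /\
       (forall k, Vc k = t k * Rk k * posp (Num.sqrt (alpha k * L k / omega) - Vd k)
                         / (t k * Rk k + Vd k)) /\
       \sum_(k < K) t k = 1 /\ \sum_(k < K) Vc k = Vctot).
Proof.
move=> K_gt0 Vctot_gt0 alpha_gt0 _ L_gt0 Vd_gt0 Rk_gt0; split.
  exact: exists_optimal (ltW Vctot_gt0) Vd_gt0 Rk_gt0.
move=> t V tV_opt.
have [theta theta_gt0 t_eq] :=
  optimal_t_closed_form K_gt0 Vctot_gt0 alpha_gt0 L_gt0 Vd_gt0 Rk_gt0 tV_opt.
have [omega omega_gt0 V_eq] :=
  optimal_V_closed_form K_gt0 Vctot_gt0 alpha_gt0 L_gt0 Vd_gt0 Rk_gt0 tV_opt.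
have [t_sum V_sum] := optimal_budgets K_gt0 Vctot_gt0 alpha_gt0 L_gt0 Vd_gt0 Rk_gt0 tV_opt.
by exists theta, omega.
Qed.
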